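(* (i) $(1,2;3,4)\sim(1,2;4,3)$. (ii) $(1,2;3,4;5)\sim(1,2;4,3;5)\sim(1,2;4,5;3)\sim(1,2;5,4;3)$. (iii) $(1,2;3,5;4)\sim(1,2;5,3;4)$.
   Context: A partially ordered pattern (POP) $p$ of size $k$ is a partial order $\le_p$ on $[k]$. A permutation $\pi=\pi_1\cdots\pi_n$ contains $p$ if there are indices $i_1<\dots<i_k$ with $\pi_{i_j}<\pi_{i_m}$ whenever $j<_p m$; otherwise it avoids $p$. $p\sim q$ (Wilf-equivalence) means the numbers of permutations of $[n]$ avoiding $p$ and avoiding $q$ coincide for all $n\ge1$. Notation: $(a,b;c,d)$ denotes the POP of size $4$ on $\{a,b,c,d\}=[4]$ whose only relations are $b<a$ and $d<c$; $(a,b;c,d;e)$ denotes the POP of size $5$ on $\{a,b,c,d,e\}=[5]$ whose only relations are $b<a$ and $d<c$ (so $e$ is isolated). *)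

From mathcomp Require Import all_boot all_order all_fingroup.
Set Implicit Arguments. Unset Strict Implicit. Unset Printing Implicit Defensive.

(* A partially ordered pattern of size k: the strict order relation <_p on
   positions, given as a boolean relation on 'I_k (position j : 'I_k stands
   for the element j+1 of [k]). *)
Definition pop (k : nat) := rel 'I_k.

(* The POP on [k] generated by a list of pairs (x, y) of 1-based positions,
   each meaning x <_p y.  The lists used below are already transitively
   closed (disjoint chains of length 2), so this is exactly the order. *)
Definition pop_of (k : nat) (rels : seq (nat * nat)) : pop k :=
  fun j m => (j.+1, m.+1) \in rels.

(* (a,b;c,d): size 4, only relations b < a and d < c. *)
Definition pop4 (a b c d : nat) : pop 4 := @pop_of 4 [:: (b, a); (d, c)].
(* (a,b;c,d;e): size 5, only relations b < a and d < c (e isolated). *)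
Definition pop5 (a b c d e : nat) : pop 5 := @pop_of 5 [:: (b, a); (d, c)].

Definition contains (k n : nat) (p : pop k) (pi : 'S_n) : bool :=
  [exists f : {ffun 'I_k -> 'I_n},
     [forall j : 'I_k, forall m : 'I_k,
        ((j < m)%N ==> (f j < f m)%N) && (p j m ==> (pi (f j) < pi (f m))%N)]].

Definition avoids (k n : nat) (p : pop k) (pi : 'S_n) : bool := ~~ contains p pi.

Definition num_avoiders (k : nat) (p : pop k) (n : nat) : nat :=
  #|[set pi : 'S_n | avoids p pi]|.

Definition wilf_equiv (k l : nat) (p : pop k) (q : pop l) : Prop :=
  forall n : nat, (1 <= n)%N -> num_avoiders p n = num_avoiders q n.

From mathcomp Require Import all_boot all_order all_fingroup zify.
Set Implicit Arguments. Unset Strict Implicit. Unset Printing Implicit Defensive.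

(* Each POP in the theorem has the form (1,2;tau): an inversion followed by a
   tail tau unrelated to it, where tau consists of a isolated elements, a core
   sigma and b isolated elements.  Let t be the first position of pi that ends
   an inversion.  Then pi contains (1,2;tau) iff sigma occurs in the segment of
   pi after t with its first a and last b entries removed.  Reversing that
   segment does not change t and turns occurrences of sigma into occurrences of
   its reverse, so it is an involution of S_n exchanging the avoiders of
   (1,2;tau) with those of the POP whose core is the reverse of sigma; each
   equivalence of the theorem is of this form. *)

Lemma num_avoiders_involution n k l (p : pop k) (q : pop l) (phi : 'S_n -> 'S_n) :
  involutive phi -> (forall s, contains p s = contains q (phi s)) ->
  num_avoiders p n = num_avoiders q n.
Proof.
move=> phiK pq; rewrite /num_avoiders -(card_preimset _ (can_inj phiK)).
by apply: eq_card => s; rewrite !inE /avoids pq phiK.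
Qed.

Lemma increasing_ord_gap k (f : 'I_k -> nat) :
  (forall j m : 'I_k, j < m -> f j < f m) ->
  forall j m : 'I_k, j <= m -> f j + (m - j) <= f m.
Proof.
move=> incr j; suff gap d (m : 'I_k) : m = j + d :> nat -> f j + d <= f m.
  by move=> m /subnKC /esym /gap.
elim: d m => [|d IHd] m mE.
  by rewrite addn0 (_ : m = j) //; apply: val_inj => /=; rewrite mE addn0.
have lt_m : j + d < k by have := ltn_ord m; lia.
have := IHd (Ordinal lt_m) erefl; have := incr (Ordinal lt_m) m.
rewrite /= mE addnS ltnSn => /(_ isT); lia.
Qed.

Definition rev_pop k (q : pop k) : pop k := fun j m => q (rev_ord j) (rev_ord m).

Definition rels_within k (rels : seq (nat * nat)) : bool :=
  all (fun xy => (0 < xy.1 <= k) && (0 < xy.2 <= k)) rels.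

Definition rev_rels k (rels : seq (nat * nat)) : seq (nat * nat) :=
  [seq (k.+1 - xy.1, k.+1 - xy.2) | xy <- rels].

Lemma rels_within_rev k rels : rels_within k rels -> rels_within k (rev_rels k rels).
Proof.
move=> /allP rels_k; apply/allP => _ /mapP [[x y] /rels_k /= xy_k ->] /=; lia.
Qed.

Lemma pop_of_rev_rels k rels :
  rels_within k rels -> @pop_of k (rev_rels k rels) =2 rev_pop (@pop_of k rels).
Proof.
move=> /allP rels_k j m; rewrite /rev_pop /pop_of /=.
have jk := ltn_ord j; have mk := ltn_ord m.
apply/mapP/idP => [[[x y] xy_in [jE mE]] | jm_in].
  have /and3P [/andP [x0 xk] y0 yk] := rels_k _ xy_in.
  have -> : (k - j.+1).+1 = x by lia.
  by have -> : (k - m.+1).+1 = y by lia.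
exists ((k - j.+1).+1, (k - m.+1).+1) => //=; congr pair; lia.
Qed.

(* The POP (1,2;tau) of size 2 + a + k + b, where tau is a isolated elements,
   then the POP of size k given by [rels], then b isolated elements. *)
Definition inversion_then a k b (rels : seq (nat * nat)) : pop (2 + (a + k + b)) :=
  @pop_of _ ((2, 1) :: [seq (xy.1 + (2 + a), xy.2 + (2 + a)) | xy <- rels]).
Arguments inversion_then : clear implicits.

Section Permutations.
Variable n : nat.
Implicit Types (s : 'S_n) (l r : nat).

Lemma containsP k (p : pop k) s :
  contains p s <-> exists f : 'I_k -> 'I_n,
    (forall j m : 'I_k, j < m -> f j < f m) /\ (forall j m, p j m -> s (f j) < s (f m)).
Proof.
split=> [/existsP [f /forallP f_occ] | [f [incr rel]]].
  by exists f; split=> j m; have /andP [/implyP ? /implyP ?] := forallP (f_occ j) m.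
apply/existsP; exists (finfun f); apply/forallP => j; apply/forallP => m.
by rewrite !ffunE; apply/andP; split; apply/implyP; [apply: incr | apply: rel].
Qed.

Definition occurs_within k (q : pop k) s l r : Prop :=
  exists f : 'I_k -> 'I_n, [/\ forall j m : 'I_k, j < m -> f j < f m,
    forall j, l <= f j <= r & forall j m, q j m -> s (f j) < s (f m)].

Lemma occurs_within_sub k (q q' : pop k) s l l' r :
  subrel q' q -> l' <= l -> occurs_within q s l r -> occurs_within q' s l' r.
Proof.
move=> q'q l'l [f [incr win rel]]; exists f; split=> // [j | j m /q'q]; last exact: rel.
by have /andP [lf ->] := win j; rewrite (leq_trans l'l lf).
Qed.

Definition rev_window l r (j : 'I_n) : 'I_n :=
  if [&& l <= j, j <= r & r < n] then insubd j (l + r - j) else j.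

Lemma val_rev_window l r j :
  (rev_window l r j : nat) = if [&& l <= j, j <= r & r < n] then l + r - j else j.
Proof. by rewrite /rev_window; case: ifP => // /and3P [*]; rewrite val_insubd ifT //; lia. Qed.

Lemma rev_windowK l r : involutive (rev_window l r).
Proof.
move=> j; apply: val_inj => /=; rewrite !val_rev_window.
case c: [&& l <= j, j <= r & r < n]; rewrite ?c //.
by case/and3P: c => lj jr rn; rewrite ifT; [lia | apply/and3P; split=> //; lia].
Qed.

Definition rev_window_perm l r : 'S_n := perm (can_inj (rev_windowK l r)).

Lemma occurs_within_rev_window k (q : pop k) s l r : r < n ->
  occurs_within q s l r -> occurs_within (rev_pop q) (rev_window_perm l r * s) l r.
Proof.
move=> rn [f [incr win rel]].
have val_rev j : (rev_window l r (f j) : nat) = l + r - f j.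
  by have /andP [? ?] := win j; rewrite val_rev_window ifT //; apply/and3P.
exists (fun j => rev_window l r (f (rev_ord j))); split=> [j m jm | j | j m].
- rewrite !val_rev; have := incr (rev_ord m) (rev_ord j); have := ltn_ord m.
  have := win (rev_ord j); have := win (rev_ord m); rewrite /=; lia.
- by rewrite val_rev; have := win (rev_ord j); lia.
- by rewrite !permM !permE !rev_windowK; apply: rel.
Qed.

Definition ends_inversion s (j : nat) : bool :=
  [exists i : 'I_n, exists i' : 'I_n, [&& i' == j :> nat, i < i' & s i' < s i]].

(* This is [n] when [s] has no inversion. *)
Definition first_inv_end s : nat := find (ends_inversion s) (iota 0 n).

Lemma first_inv_end_le s : first_inv_end s <= n.
Proof. by rewrite -[leqRHS](size_iota 0 n) find_size. Qed.

Lemma first_inv_end_min s j : ends_inversion s j -> first_inv_end s <= j.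
Proof.
move=> sj; rewrite leqNgt; apply/negP => lt_j.
have := before_find 0 lt_j; rewrite nth_iota ?add0n ?sj //.
exact: leq_trans lt_j (first_inv_end_le s).
Qed.

Lemma ends_first_inversion s : first_inv_end s < n -> ends_inversion s (first_inv_end s).
Proof.
move=> lt_n; have has_s : has (ends_inversion s) (iota 0 n) by rewrite has_find size_iota.
by have := nth_find 0 has_s; rewrite nth_iota ?add0n.
Qed.

Lemma ends_inversion_prefix s s' j :
  (forall i : 'I_n, i <= j -> s' i = s i) -> ends_inversion s' j = ends_inversion s j.
Proof.
move=> ss'; apply/existsP/existsP => -[i /existsP [i' /and3P [/eqP i'j ii' si']]].
all: have [le_i' le_i] : i' <= j /\ i <= j by split; lia.
all: exists i; apply/existsP; exists i'; rewrite ii' i'j eqxx /=.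
all: by rewrite !ss' in si' *.
Qed.

Lemma first_inv_end_eq s s' :
  (forall j : 'I_n, j <= first_inv_end s -> s' j = s j) -> first_inv_end s' = first_inv_end s.
Proof.
move=> ss'; set t := first_inv_end s.
have ends_eq j : j <= t -> ends_inversion s' j = ends_inversion s j.
  by move=> jt; apply: ends_inversion_prefix => i ij; apply: ss'; lia.
apply/eqP; rewrite eqn_leq; apply/andP; split.
  case: (ltnP t n) => [lt_n | le_n]; last exact: leq_trans (first_inv_end_le _) le_n.
  by apply: first_inv_end_min; rewrite ends_eq // ends_first_inversion.
rewrite leqNgt; apply/negP => lt_t.
have /ends_first_inversion : first_inv_end s' < n by apply: leq_trans lt_t (first_inv_end_le _).
by rewrite ends_eq ?(ltnW lt_t) // => /first_inv_end_min; lia.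
Qed.

Definition tail_reversal a b s : 'S_n :=
  rev_window_perm (first_inv_end s + 1 + a) (n.-1 - b) * s.

Lemma first_inv_end_tail_reversal a b s : first_inv_end (tail_reversal a b s) = first_inv_end s.
Proof.
apply: first_inv_end_eq => j jt; rewrite permM permE; congr (s _); apply: val_inj => /=.
by rewrite val_rev_window ifF //; apply/negbTE/andP => -[? _]; lia.
Qed.

Lemma tail_reversalK a b : involutive (tail_reversal a b).
Proof.
move=> s; apply/permP => j.
by rewrite !permM !permE first_inv_end_tail_reversal rev_windowK.
Qed.

Lemma occurs_tail_reversal a b k (q : pop k) s : first_inv_end s < n ->
  occurs_within q s (first_inv_end s + 1 + a) (n.-1 - b) ->
  occurs_within (rev_pop q) (tail_reversal a b s) (first_inv_end s + 1 + a) (n.-1 - b).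
Proof. by move=> lt_n; apply: occurs_within_rev_window; lia. Qed.

Lemma occurs_of_contains_inversion_then a k b rels s :
  contains (inversion_then a k b rels) s ->
  exists i1 i2 : 'I_n, [/\ i1 < i2, s i2 < s i1 &
    occurs_within (@pop_of k rels) s (i2 + 1 + a) (n.-1 - b)].
Proof.
move=> /containsP [g [incr rel]]; set K := a + k + b in g incr rel *.
have gap := increasing_ord_gap incr.
pose o0 : 'I_(2 + K) := Ordinal (isT : 0 < K.+2).
pose o1 : 'I_(2 + K) := Ordinal (isT : 1 < K.+2).
pose last : 'I_(2 + K) := Ordinal (ltnSn K.+1).
pose core_pos (x : 'I_k) : 'I_(2 + K) := rshift 2 (lshift b (rshift a x)).
exists (g o0), (g o1); split; [exact: incr | exact: rel | ].
exists (fun x => g (core_pos x)); split=> [x y xy | x | x y xy_rel].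
- by apply: incr; rewrite /= !ltn_add2l.
- have lo := gap o1 (core_pos x) isT.
  have le_last : core_pos x <= last by rewrite /= /K; have := ltn_ord x; lia.
  have hi := gap _ _ le_last; have := ltn_ord (g last).
  move: lo hi; rewrite /= /K; have := ltn_ord x; lia.
- apply: rel; rewrite /inversion_then /pop_of in_cons; apply/orP; right => /=.
  have := map_f (fun xy => (xy.1 + (2 + a), xy.2 + (2 + a))) xy_rel.
  have shift z : z.+1 + (2 + a) = (2 + (a + z)).+1 by rewrite addSn addnC -addnA.
  by rewrite /= !shift.
Qed.

Lemma contains_inversion_then_of_occurs a k b rels s (i1 i2 : 'I_n) :
  0 < k -> rels_within k rels -> i1 < i2 -> s i2 < s i1 ->
  occurs_within (@pop_of k rels) s (i2 + 1 + a) (n.-1 - b) ->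
  contains (inversion_then a k b rels) s.
Proof.
case: k => // k _ /allP rels_k i12 si12 [f [incr win rel]].
pose F x : nat := f (inord x).
have F_win x : x < k.+1 -> i2 + 1 + a <= F x /\ F x <= n.-1 - b.
  by move=> xk; have := win (inord x); rewrite /F; lia.
have F_incr x y : x < y -> y < k.+1 -> F x < F y.
  by move=> xy yk; apply: incr; rewrite !inordK //; lia.
pose G j := if j == 0 then i1 : nat else if j < 2 + a then i2 + j.-1
  else if j < 2 + a + k.+1 then F (j - (2 + a)) else n - b + (j - (2 + a + k.+1)).
have G_lt j : j < 2 + (a + k.+1 + b) -> G j < n.
  move=> jK; have := F_win 0 isT; have := F_win (j - (2 + a)).
  by have := ltn_ord i1; have := ltn_ord i2; rewrite /G; do ![case: ifP => ?]; lia.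
have G_incr j m : j < m -> m < 2 + (a + k.+1 + b) -> G j < G m.
  move=> jm mK; have := F_win 0 isT; have := F_win (j - (2 + a)); have := F_win (m - (2 + a)).
  have := F_incr (j - (2 + a)) (m - (2 + a)).
  by have := ltn_ord i2; rewrite /G; do ![case: ifP => ?]; lia.
pose g (j : 'I_(2 + (a + k.+1 + b))) : 'I_n := insubd i1 (G j).
have val_g j : g j = G j :> nat by rewrite val_insubd G_lt.
have g_core (j : 'I_(2 + (a + k.+1 + b))) :
  2 + a <= j < 2 + a + k.+1 -> g j = f (inord (j - (2 + a))).
  by move=> jr; apply: val_inj => /=; rewrite val_g /G; do ![case: ifP => ?] => //; lia.
apply/containsP; exists g; split=> [j m jm | j m].
  by rewrite !val_g; apply: G_incr.
rewrite /inversion_then /pop_of in_cons => /orP [/eqP [j1 m0] | ].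
  have -> : g j = i2 by apply: val_inj => /=; rewrite val_g /G j1 addn0.
  by have -> : g m = i1 by apply: val_inj => /=; rewrite val_g /G m0.
move=> /mapP [[x y] /[dup] xy_in /rels_k /and3P [/andP [/= x0 xk] y0 yk] [jE mE]].
rewrite !g_core; try lia; apply: rel; rewrite /pop_of !inordK; try lia.
have -> : (j - (2 + a)).+1 = x by lia.
by have -> : (m - (2 + a)).+1 = y by lia.
Qed.

Lemma contains_inversion_thenP a k b rels s : 0 < k -> rels_within k rels ->
  contains (inversion_then a k b rels) s <-> first_inv_end s < n /\
    occurs_within (@pop_of k rels) s (first_inv_end s + 1 + a) (n.-1 - b).
Proof.
move=> k0 rels_k; split.
  move=> /occurs_of_contains_inversion_then [i1 [i2 [i12 si12 occ]]].
  have t_i2 : first_inv_end s <= i2.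
    by apply: first_inv_end_min; apply/existsP; exists i1; apply/existsP; exists i2; rewrite eqxx i12.
  split; first exact: leq_ltn_trans t_i2 (ltn_ord i2).
  by apply: occurs_within_sub occ => //; rewrite !leq_add2r.
move=> [/ends_first_inversion /existsP [i1 /existsP [i2 /and3P [/eqP i2t i12 si12]]] occ].
by apply: (contains_inversion_then_of_occurs (i1 := i1) (i2 := i2)); rewrite // i2t.
Qed.

End Permutations.

Lemma wilf_equiv_inversion_then_rev a k b rels : 0 < k -> rels_within k rels ->
  wilf_equiv (inversion_then a k b rels) (inversion_then a k b (rev_rels k rels)).
Proof.
move=> k0 rels_k n _; have rev_k := rels_within_rev rels_k.
apply: (num_avoiders_involution (tail_reversalK a b)) => s.
apply/idP/idP; rewrite !contains_inversion_thenP // first_inv_end_tail_reversal.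
  move=> [t_n occ]; split=> //.
  by apply: occurs_within_sub (occurs_tail_reversal t_n occ) => // j m; rewrite pop_of_rev_rels.
move=> [t_n occ]; split=> //.
rewrite -(first_inv_end_tail_reversal a b s) in t_n occ.
have := occurs_tail_reversal t_n occ; rewrite tail_reversalK first_inv_end_tail_reversal.
apply: occurs_within_sub => // j m jm.
by rewrite /rev_pop pop_of_rev_rels // /rev_pop !rev_ordK.
Qed.

Theorem mainTheorem13 :
  wilf_equiv (pop4 1 2 3 4) (pop4 1 2 4 3)
  /\ (wilf_equiv (pop5 1 2 3 4 5) (pop5 1 2 4 3 5)
      /\ wilf_equiv (pop5 1 2 4 3 5) (pop5 1 2 4 5 3)
      /\ wilf_equiv (pop5 1 2 4 5 3) (pop5 1 2 5 4 3))
  /\ wilf_equiv (pop5 1 2 3 5 4) (pop5 1 2 5 3 4).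
Proof.
split; [|split; [split; [|split]|]].
- exact: (@wilf_equiv_inversion_then_rev 0 2 0 [:: (2, 1)]).
- exact: (@wilf_equiv_inversion_then_rev 0 2 1 [:: (2, 1)]).
- exact: (@wilf_equiv_inversion_then_rev 0 3 0 [:: (1, 2)]).
- exact: (@wilf_equiv_inversion_then_rev 1 2 0 [:: (2, 1)]).
- exact: (@wilf_equiv_inversion_then_rev 0 3 0 [:: (3, 1)]).
Qed.
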